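(* Under the hypotheses (i)–(iv) below, for $0<\delta<1$ let $$(x^*(\delta),z^*(\delta))=\operatorname*{argmax}_{x}\operatorname*{argmin}_{\|z\|_\infty\le\ell_F}\Big\{V(\theta;z)+\delta\nabla_\theta V(\theta;z)^\top x-F^*(z)-\tfrac{\delta}{2}\|x\|^2\Big\}.$$ Then $\|x^*(\delta)-\nabla_\theta R(\pi_\theta)\|^2=\mathcal O(\delta^2)$ as $\delta\to0_+$. Hypotheses: (i) $F:\mathbb{R}^{SA}\to\mathbb{R}$ is concave and differentiable everywhere with $\max\{\|\nabla F(\lambda)\|_\infty:\|\lambda\|_1\le\frac{2}{1-\gamma}\}\le\ell_F$; (ii) $\|\nabla F(\lambda)-\nabla F(\lambda')\|_\infty\le L_F\|\lambda-\lambda'\|_1$ for all $\lambda,\lambda'$; (iii) $F^*$ is $\ell_{F^*}$-Lipschitz w.r.t. $\|\cdot\|_\infty$ on $\{z:\|z\|_\infty\le2\ell_F,F^*(z)>-\infty\}$; (iv) $\pi_\theta$ is differentiable in $\theta$ with $\|\nabla_\theta\pi_\theta(\cdot|s)\|_{\infty,2}\le C$ for all $s$.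
   Context: Finite MDP with states $\mathcal S$ ($S=|\mathcal S|$), actions $\mathcal A$ ($A=|\mathcal A|$), initial distribution $\xi$, discount $\gamma\in(0,1)$. Policies $\pi_\theta$, $\theta\in\Theta\subset\mathbb{R}^d$; occupancy measure $\lambda(\theta)_{sa}=\sum_{t\ge0}\gamma^t\mathbb P(s_t=s,a_t=a\mid\pi_\theta,s_0\sim\xi)$; $R(\pi_\theta)=F(\lambda(\theta))$; $V(\theta;z)=\langle z,\lambda(\theta)\rangle$ for $z\in\mathbb{R}^{SA}$; Fenchel dual $F^*(z)=\inf_\lambda\{\langle\lambda,z\rangle-F(\lambda)\}$. $\nabla_\theta\pi_\theta(\cdot|s)=[\nabla_\theta\pi_\theta(1|s),\dots,\nabla_\theta\pi_\theta(A|s)]\in\mathbb{R}^{d\times A}$ and $\|B\|_{\infty,2}:=\max_{\|u\|_\infty\le1}\|Bu\|_2$. *)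

From HB Require Import structures.
From mathcomp Require Import all_boot all_order all_algebra.
From mathcomp Require Import all_classical all_reals.
From mathcomp Require Import ereal topology normedtype sequences derive.
Set Implicit Arguments. Unset Strict Implicit. Unset Printing Implicit Defensive.
Import Order.TTheory GRing.Theory Num.Theory.
Import numFieldNormedType.Exports.
Local Open Scope ring_scope.
Local Open Scope classical_set_scope.

(* States are 'I_nS, actions are 'I_nA (any finite set up to relabeling);
   vectors of R^{SA} are nS x nA matrices, parameters are row vectors 'rV_d. *)

Section Defs.
Variable R : realType.

Definition l1norm (nS nA : nat) (M : 'M[R]_(nS, nA)) : R :=
  \sum_(s < nS) \sum_(a < nA) `|M s a|.
Definition linfnorm (nS nA : nat) (M : 'M[R]_(nS, nA)) : R :=
  \big[Num.max/0]_(s < nS) \big[Num.max/0]_(a < nA) `|M s a|.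
Definition mxdot (nS nA : nat) (M N : 'M[R]_(nS, nA)) : R :=
  \sum_(s < nS) \sum_(a < nA) M s a * N s a.
Definition rvdot (d : nat) (x y : 'rV[R]_d) : R := \sum_(i < d) x 0 i * y 0 i.
Definition sqnorm2 (d : nat) (x : 'rV[R]_d) : R := rvdot x x.

Definition grad (d : nat) (f : 'rV[R]_d -> R) (th : 'rV[R]_d) : 'rV[R]_d :=
  \row_(i < d) derive f th (delta_mx 0 i).
Definition gradM (nS nA : nat) (F : 'M[R]_(nS, nA) -> R) (l : 'M[R]_(nS, nA))
  : 'M[R]_(nS, nA) :=
  \matrix_(s < nS, a < nA) derive F l (delta_mx s a).

Definition concave_fun (nS nA : nat) (F : 'M[R]_(nS, nA) -> R) : Prop :=
  forall (x y : 'M[R]_(nS, nA)) (t : R), 0 <= t <= 1 ->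
    t * F x + (1 - t) * F y <= F (t *: x + (1 - t) *: y).

Definition fenchel_dual (nS nA : nat) (F : 'M[R]_(nS, nA) -> R)
  (z : 'M[R]_(nS, nA)) : \bar R :=
  ereal_inf [set ((mxdot l z - F l)%:E) | l in [set: 'M[R]_(nS, nA)]].

Definition is_distr (n : nat) (p : 'I_n -> R) : Prop :=
  (forall i, 0 <= p i) /\ \sum_(i < n) p i = 1.

Fixpoint state_distr (nS nA : nat) (P : 'I_nS -> 'I_nA -> 'I_nS -> R)
  (xi : 'I_nS -> R) (pol : 'I_nS -> 'I_nA -> R) (t : nat) : 'I_nS -> R :=
  match t with
  | 0%N => xi
  | t'.+1 => fun s' => \sum_(s < nS) \sum_(a < nA)
       state_distr P xi pol t' s * pol s a * P s a s'
  end.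

(* occupancy measure lambda_{sa} = sum_t gamma^t P(s_t = s, a_t = a) *)
Definition occupancy (nS nA : nat) (P : 'I_nS -> 'I_nA -> 'I_nS -> R)
  (xi : 'I_nS -> R) (gamma : R) (pol : 'I_nS -> 'I_nA -> R) : 'M[R]_(nS, nA) :=
  \matrix_(s < nS, a < nA)
    limn (series (fun t : nat => gamma ^+ t * (state_distr P xi pol t s * pol s a))).

(* ||B||_{inf,2} <= C for B = [grad pi(1|s), ..., grad pi(A|s)] in R^{d x A}:
   max_{||u||_inf <= 1} ||B u||_2 <= C, written out *)
Definition opnorm_inf2_le (d nA : nat) (B : 'I_nA -> 'rV[R]_d) (C : R) : Prop :=
  forall u : 'I_nA -> R, (forall a, `|u a| <= 1) ->
    Num.sqrt (sqnorm2 (\sum_(a < nA) u a *: B a)) <= C.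

End Defs.

From HB Require Import structures.
From mathcomp Require Import all_boot all_order all_algebra.
From mathcomp Require Import all_classical all_reals.
From mathcomp Require Import ereal topology normedtype sequences derive.
From mathcomp Require Import ring lra.
Import Order.TTheory GRing.Theory Num.Theory.
Import numFieldNormedType.Exports.
Local Open Scope ring_scope.
Local Open Scope classical_set_scope.

(* Write lambda = lambda(theta), J for the Jacobian of the occupancy map at
   theta (so grad_theta V(theta; z) = J^T z and grad R = J^T grad F(lambda)),
   and g0 = J^T grad F(lambda).  The inner infimum over ||z||_inf <= l_F is
   squeezed between two explicit functions: Fenchel-Young bounds it below by
   the primal value F(lambda + delta J x) - delta/2 ||x||^2, and choosing
   z = grad F(l) for an admissible point l (||l||_1 <= 2/(1-gamma), where the
   gradient bound (i) holds) bounds it above by the tangent model of F at l.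
   Hence a maximizer x* is a "certified maximizer": every primal value lies
   below every upper model at x*.  Using the quadratic lower bound coming from
   the Lipschitz gradient (ii), testing with (x, l) = (g0, lambda) shows that
   x* is O(1)-close to g0, so mu = lambda + delta J x* stays admissible; testing
   with (x, l) = (J^T grad F(mu), mu) then shows that x* = J^T grad F(mu)
   exactly, and (ii) gives ||x* - g0|| <= L ||delta J x*||_1 = O(delta). *)

Section MatrixNorms.
Context {R : realType} {m n : nat}.
Implicit Types M N : 'M[R]_(m, n).

Lemma linfnorm_ge0 M : 0 <= linfnorm M.
Proof.
rewrite /linfnorm; elim/big_ind: _ => // [a b ha hb|i _]; first by rewrite le_max ha.
by elim/big_ind: _ => // a b ha hb; rewrite le_max ha.
Qed.

Lemma linfnorm_ge_entry M i j : `|M i j| <= linfnorm M.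
Proof.
apply: le_trans (le_bigmax _ (fun i => \big[Num.max/0]_(j < n) `|M i j|) i).
exact: (le_bigmax _ (fun j => `|M i j|) j).
Qed.

Lemma l1norm_ge0 M : 0 <= l1norm M.
Proof. by apply: sumr_ge0 => i _; apply: sumr_ge0. Qed.

Lemma l1normD M N : l1norm (M + N) <= l1norm M + l1norm N.
Proof.
rewrite /l1norm -big_split; apply: ler_sum => i _.
by rewrite -big_split; apply: ler_sum => j _; rewrite mxE ler_normD.
Qed.

Lemma l1normZ k M : l1norm (k *: M) = `|k| * l1norm M.
Proof.
rewrite /l1norm mulr_sumr; apply: eq_bigr => i _; rewrite mulr_sumr.
by apply: eq_bigr => j _; rewrite mxE normrM.
Qed.

Lemma l1norm_sum (I : finType) (f : I -> 'M[R]_(m, n)) :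
  l1norm (\sum_k f k) <= \sum_k l1norm (f k).
Proof.
rewrite /l1norm [in X in _ <= X]exchange_big /=; apply: ler_sum => i _.
rewrite [in X in _ <= X]exchange_big /=; apply: ler_sum => j _.
by rewrite summxE ler_norm_sum.
Qed.

Lemma mxdot_holder M N : `|mxdot M N| <= linfnorm M * l1norm N.
Proof.
rewrite /mxdot /l1norm mulr_sumr.
apply: le_trans (ler_norm_sum _ _ _) _; apply: ler_sum => i _.
rewrite mulr_sumr; apply: le_trans (ler_norm_sum _ _ _) _; apply: ler_sum => j _.
by rewrite normrM ler_wpM2r // linfnorm_ge_entry.
Qed.

Lemma mxdotC M N : mxdot M N = mxdot N M.
Proof. by apply: eq_bigr => i _; apply: eq_bigr => j _; rewrite mulrC. Qed.

Lemma mxdotDr M N N' : mxdot M (N + N') = mxdot M N + mxdot M N'.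
Proof.
rewrite /mxdot -big_split; apply: eq_bigr => i _; rewrite -big_split.
by apply: eq_bigr => j _; rewrite mxE mulrDr.
Qed.

Lemma mxdotZr M k N : mxdot M (k *: N) = k * mxdot M N.
Proof.
rewrite /mxdot mulr_sumr; apply: eq_bigr => i _; rewrite mulr_sumr.
by apply: eq_bigr => j _; rewrite mxE mulrCA.
Qed.

Lemma mxdotBr M N N' : mxdot M (N - N') = mxdot M N - mxdot M N'.
Proof. by rewrite mxdotDr -scaleN1r mxdotZr mulN1r. Qed.

Lemma mxdotBl M M' N : mxdot (M - M') N = mxdot M N - mxdot M' N.
Proof. by rewrite mxdotC mxdotBr !(mxdotC N). Qed.

Lemma mxdot_sumr (I : finType) M (f : I -> 'M[R]_(m, n)) :
  mxdot M (\sum_k f k) = \sum_k mxdot M (f k).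
Proof.
rewrite /mxdot (eq_bigr (fun i => \sum_k \sum_j M i j * f k i j)).
  by rewrite exchange_big.
move=> i _; rewrite exchange_big; apply: eq_bigr => j _.
by rewrite summxE mulr_sumr.
Qed.

End MatrixNorms.

Section RowInnerProduct.
Context {R : realType} {d : nat}.
Implicit Types x y : 'rV[R]_d.

Lemma rvdotC x y : rvdot x y = rvdot y x.
Proof. by apply: eq_bigr => i _; rewrite mulrC. Qed.

Lemma rvdotDl x x' y : rvdot (x + x') y = rvdot x y + rvdot x' y.
Proof. by rewrite /rvdot -big_split; apply: eq_bigr => i _; rewrite mxE mulrDl. Qed.

Lemma rvdotZl k x y : rvdot (k *: x) y = k * rvdot x y.
Proof. by rewrite /rvdot mulr_sumr; apply: eq_bigr => i _; rewrite mxE mulrA. Qed.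

Lemma rvdotBl x x' y : rvdot (x - x') y = rvdot x y - rvdot x' y.
Proof. by rewrite rvdotDl -scaleN1r rvdotZl mulN1r. Qed.

Lemma sqnorm2_ge0 x : 0 <= sqnorm2 x.
Proof. by apply: sumr_ge0 => i _; rewrite -expr2 sqr_ge0. Qed.

Lemma sqnorm2D x y : sqnorm2 (x + y) = sqnorm2 x + 2 * rvdot x y + sqnorm2 y.
Proof. by rewrite /sqnorm2 !rvdotDl !(rvdotC _ (x + y)) !rvdotDl (rvdotC y x); ring. Qed.

Lemma sqnorm2B x y : sqnorm2 (x - y) = sqnorm2 x - 2 * rvdot x y + sqnorm2 y.
Proof. by rewrite /sqnorm2 !rvdotBl !(rvdotC _ (x - y)) !rvdotBl (rvdotC y x); ring. Qed.

Lemma sqnorm2D_le x y : sqnorm2 (x + y) <= 2 * sqnorm2 x + 2 * sqnorm2 y.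
Proof. by have := sqnorm2_ge0 (x - y); rewrite sqnorm2B sqnorm2D; lra. Qed.

End RowInnerProduct.

Section ObjectiveCalculus.
Context {R : realType} {m n : nat}.
Variable F : 'M[R]_(m, n) -> R.
Implicit Types l h : 'M[R]_(m, n).

Lemma gradM_diff l h : differentiable F l -> 'd F l h = mxdot (gradM F l) h.
Proof.
move=> dF; rewrite {1}(matrix_sum_delta h) linear_sum /mxdot.
apply: eq_bigr => i _; rewrite linear_sum; apply: eq_bigr => j _.
by rewrite linearZ /= mxE deriveE // mulrC.
Qed.

Lemma is_derive_line l0 h (t : R) :
  differentiable F (t *: h + l0) ->
  is_derive t (1 : R) (fun s => F (s *: h + l0)) ('d F (t *: h + l0) h).
Proof.
move=> dF.
have E : (fun s : R => s^-1 *: (((fun s => F (s *: h + l0)) \o shift t) (s *: 1)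
             - F (t *: h + l0))) =
         (fun s : R => s^-1 *: ((F \o shift (t *: h + l0)) (s *: h) - F (t *: h + l0))).
  apply: funext => s /=; congr (_ *: (F _ - _)).
  by rewrite [s *: 1]mulr1 scalerDl addrA.
apply: DeriveDef; first by rewrite /derivable E; exact: (@diff_derivable _ _ _ _ _ h dF).
by rewrite /derive E -/(derive F (t *: h + l0) h) deriveE.
Qed.

Lemma concave_tangent_ub l0 l :
  concave_fun F -> differentiable F l0 ->
  F l <= F l0 + mxdot (gradM F l0) (l - l0).
Proof.
move=> cF dF; set v := l - l0.
have hD : (fun s : R => s^-1 *: ((F \o shift l0) (s *: v) - F l0)) @ 0^' --> 'D_v F l0.
  exact: (@diff_derivable _ _ _ _ _ v dF).
rewrite -gradM_diff // -deriveE //.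
suff : F l - F l0 <= 'D_v F l0 by lra.
apply: (cvgr_to_ge (cvg_dnbhs_at_right hD)); near=> s.
have s0 : 0 < s by near: s; exact: nbhs_right_gt.
have s1 : s < 1 by near: s; exact: nbhs_right_lt.
have := cF l l0 s; rewrite (ltW s0) (ltW s1) => /(_ isT).
have -> : s *: l + (1 - s) *: l0 = s *: v + l0.
  by apply/matrixP => i j; rewrite /v !mxE; ring.
move=> chord; have : s * (F l - F l0) <= F (s *: v + l0) - F l0 by lra.
by rewrite -[s^-1 *: _]/(s^-1 * _) /= ler_pdivlMl.
Unshelve. all: by end_near.
Qed.

Hypothesis dF : forall l, differentiable F l.

(* Quadratic lower bound from an L-Lipschitz gradient (mean value theorem). *)
Lemma lipschitz_grad_lb (L : R) l0 h :
  (forall l l', linfnorm (gradM F l - gradM F l') <= L * l1norm (l - l')) ->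
  F l0 + mxdot (gradM F l0) h - `|L| * l1norm h ^+ 2 <= F (l0 + h).
Proof.
move=> hL; rewrite [l0 + h]addrC.
have hder (t : R) : t \in `]0, 1[%R ->
    is_derive t (1 : R) (fun s => F (s *: h + l0)) (mxdot (gradM F (t *: h + l0)) h).
  by move=> _; rewrite -gradM_diff //; exact: is_derive_line.
have hcont : {within `[0, 1], continuous (fun s : R => F (s *: h + l0))}.
  apply: continuous_subspaceT => t; apply: differentiable_continuous.
  by apply/derivable1_diffP; have [] := @is_derive_line l0 h t (dF _).
have [c cI E] := MVT ltr01 hder hcont.
have /andP[c0 c1] : (0 < c) && (c < 1) by rewrite in_itv /= in cI.
move: E; rewrite scale1r scale0r add0r subr0 mulr1 => E.
have : `|mxdot (gradM F (c *: h + l0) - gradM F l0) h| <= `|L| * l1norm h ^+ 2.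
  apply: le_trans (mxdot_holder _ _) _.
  rewrite expr2 mulrA ler_wpM2r ?l1norm_ge0 //; apply: le_trans (hL _ _) _.
  rewrite addrK l1normZ (ger0_norm (ltW c0)).
  apply: le_trans (ler_norm _) _; rewrite normrM ler_wpM2l //.
  rewrite ger0_norm ?mulr_ge0 ?l1norm_ge0 ?(ltW c0) //.
  by rewrite ler_piMl ?l1norm_ge0 ?ltW.
rewrite mxdotBl ler_norml => /andP[hlow _]; lra.
Qed.

Lemma fenchel_young z l : (fenchel_dual F z <= (mxdot l z - F l)%:E)%E.
Proof. by apply: ereal_inf_lbound; exists l. Qed.

Lemma fenchel_dual_grad l0 :
  concave_fun F -> fenchel_dual F (gradM F l0) = (mxdot l0 (gradM F l0) - F l0)%:E.
Proof.
move=> cF; apply/eqP; rewrite eq_le fenchel_young /=.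
apply: le_ereal_inf_tmp => _ [l _ <-]; rewrite lee_fin.
have := concave_tangent_ub l0 l cF (dF l0).
by rewrite mxdotBr !(mxdotC (gradM F l0)); lra.
Qed.

Lemma fenchel_young_shift z mu (q : R) :
  ((F mu - q)%:E <= (mxdot z mu - q)%:E - fenchel_dual F z)%E.
Proof.
have := fenchel_young z mu; case: (fenchel_dual F z) => [r| |] //= hr; last by rewrite leey.
by rewrite lee_fin in hr; rewrite -EFinB lee_fin mxdotC; lra.
Qed.

Lemma fenchel_young_shift_grad l0 mu (q : R) : concave_fun F ->
  ((mxdot (gradM F l0) mu - q)%:E - fenchel_dual F (gradM F l0)
   = (F l0 + mxdot (gradM F l0) (mu - l0) - q)%:E)%E.
Proof.
by move=> cF; rewrite fenchel_dual_grad // -EFinB mxdotBr (mxdotC l0); congr _%:E; ring.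
Qed.

End ObjectiveCalculus.

(* With M_p the state transition matrix
   of the policy p, the state distributions are d_t = xi M_p^t, so the
   discounted visitation vector is d_p = xi (1 - gamma M_p)^-1, the occupancy
   measure factors as lambda_{sa} = d_p(s) p(a|s), and its l1 norm is
   1 / (1 - gamma). *)
Section Occupancy.
Context {R : realType} {nS nA : nat}.
Variables (P : 'I_nS -> 'I_nA -> 'I_nS -> R) (xi : 'I_nS -> R) (gamma : R).

Definition trans_mx (p : 'I_nS -> 'I_nA -> R) : 'M[R]_nS :=
  \matrix_(s, s') \sum_(a < nA) p s a * P s a s'.
Definition resolvent_mx p : 'M[R]_nS := 1%:M - gamma *: trans_mx p.
Definition init_row : 'rV[R]_nS := \row_s xi s.
Definition state_row p t : 'rV[R]_nS := \row_s state_distr P xi p t s.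
Definition disc_partial p n : 'rV[R]_nS := \sum_(t < n) gamma ^+ t *: state_row p t.
Definition disc_visits p : 'rV[R]_nS := init_row *m invmx (resolvent_mx p).

Lemma state_rowS p t : state_row p t.+1 = state_row p t *m trans_mx p.
Proof.
apply/matrixP => i s'; rewrite !mxE /=; apply: eq_bigr => s _.
by rewrite !mxE mulr_sumr; apply: eq_bigr => a _; rewrite mulrA.
Qed.

Lemma disc_partial_resolvent p n :
  disc_partial p n *m resolvent_mx p = init_row - gamma ^+ n *: state_row p n.
Proof.
elim: n => [|n IH].
  rewrite /disc_partial big_ord0 mul0mx expr0 scale1r.
  by apply/matrixP => i s; rewrite !mxE subrr.
rewrite /disc_partial big_ord_recr /= -/(disc_partial p n) mulmxDl IH.
rewrite state_rowS /resolvent_mx mulmxBr mulmx1 -scalemxAl -scalemxAr.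
by apply/matrixP => i j; rewrite !mxE exprSr; ring.
Qed.

Hypothesis Pd : forall s a, is_distr (P s a).
Hypothesis xid : is_distr xi.
Hypothesis g01 : 0 < gamma < 1.

Section FixedPolicy.
Variable p : 'I_nS -> 'I_nA -> R.
Hypothesis pd : forall s, is_distr (p s).

Lemma state_distr_is_distr t : is_distr (state_distr P xi p t).
Proof.
elim: t => [|t [IH0 IH1]] //=; split.
  move=> s'; apply: sumr_ge0 => s _; apply: sumr_ge0 => a _.
  by rewrite !mulr_ge0 //; [case: (pd s)|case: (Pd s a)].
rewrite exchange_big /= -IH1; apply: eq_bigr => s _.
rewrite exchange_big /= (eq_bigr (fun a => state_distr P xi p t s * p s a)).
  by rewrite -mulr_sumr; case: (pd s) => _ ->; rewrite mulr1.
by move=> a _; rewrite -mulr_sumr; case: (Pd s a) => _ ->; rewrite mulr1.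
Qed.

Lemma trans_mx_ge0 s s' : 0 <= trans_mx p s s'.
Proof.
rewrite mxE; apply: sumr_ge0 => a _.
by rewrite mulr_ge0 //; [case: (pd s)|case: (Pd s a)].
Qed.

Lemma trans_mx_row_sum s : \sum_s' trans_mx p s s' = 1.
Proof.
under eq_bigr do rewrite mxE.
rewrite exchange_big /=; case: (pd s) => _ <-; apply: eq_bigr => a _.
by rewrite -mulr_sumr; case: (Pd s a) => _ ->; rewrite mulr1.
Qed.

(* 1 - gamma M_p is invertible: a kernel vector v would satisfy
   ||v||_1 <= gamma ||v||_1 since M_p is stochastic. *)
Lemma resolvent_unit : resolvent_mx p \in unitmx.
Proof.
have g0 : 0 <= gamma by case/andP: g01 => /ltW.
rewrite unitmxE unitfE; apply/negP => /det0P [v vn0].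
rewrite /resolvent_mx mulmxBr mulmx1 -scalemxAr => /eqP; rewrite subr_eq0 => /eqP vE.
have contract : \sum_s `|v 0 s| <= gamma * \sum_s `|v 0 s|.
  rewrite {1}vE; under eq_bigr do rewrite mxE normrM (ger0_norm g0).
  rewrite -mulr_sumr ler_wpM2l //; under eq_bigr do rewrite mxE.
  apply: le_trans (ler_sum _ (fun s' _ => ler_norm_sum _ _ _)) _.
  rewrite exchange_big /=; apply: ler_sum => s _.
  under eq_bigr do rewrite normrM (ger0_norm (trans_mx_ge0 _ _)).
  by rewrite -mulr_sumr trans_mx_row_sum mulr1.
have v1_eq0 : \sum_s `|v 0 s| = 0.
  have S0 := sumr_ge0 (index_enum _) (fun s _ => normr_ge0 (v 0 s)).
  apply/eqP; rewrite eq_le S0 andbT; case/andP: g01 => _ g1; nra.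
move/negP: vn0; apply; apply/eqP/matrixP => i s; rewrite ord1 mxE.
by apply/normr0_eq0; apply: (psumr_eq0P _ v1_eq0).
Qed.

Lemma disc_partial_cvg s : (fun n => disc_partial p n 0 s) @ \oo --> disc_visits p 0 s.
Proof.
have g0 : 0 <= gamma by case/andP: g01 => /ltW.
have -> : (fun n => disc_partial p n 0 s) = (fun n => disc_visits p 0 s
      - gamma ^+ n * (state_row p n *m invmx (resolvent_mx p)) 0 s).
  apply/funext => n; rewrite /disc_visits -(mulmxK resolvent_unit (disc_partial p n)).
  by rewrite disc_partial_resolvent mulmxBl -scalemxAl !mxE.
rewrite -[X in _ --> X]subr0; apply: cvgB; first exact: cvg_cst.
set B := \sum_k `|invmx (resolvent_mx p) k s|.
have geomB : (fun n : nat => gamma ^+ n * B) @ \oo --> 0.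
  rewrite -(mul0r B); apply: cvgMr_tmp; apply: cvg_expr.
  by rewrite ger0_norm //; case/andP: g01.
apply: (squeeze_cvgr (f := fun n : nat => - (gamma ^+ n * B))
                     (h := fun n : nat => gamma ^+ n * B)).
- apply: nearW => n; rewrite -ler_norml normrM ger0_norm ?exprn_ge0 //.
  rewrite ler_wpM2l ?exprn_ge0 // mxE.
  apply: le_trans (ler_norm_sum _ _ _) _; apply: ler_sum => k _.
  rewrite normrM mxE ler_piMl //.
  have [h0 h1] := state_distr_is_distr n.
  by rewrite ger0_norm ?h0 // -h1 (bigD1 k) //= lerDl sumr_ge0.
- by rewrite -oppr0; apply: cvgN.
- exact: geomB.
Qed.

Lemma occupancy_factor s a : occupancy P xi gamma p s a = disc_visits p 0 s * p s a.
Proof.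
rewrite mxE (_ : series _ = fun n => disc_partial p n 0 s * p s a).
  by apply: cvg_lim => //; apply: cvgMr_tmp; apply: disc_partial_cvg.
apply/funext => n; rewrite /series /= big_mkord /disc_partial summxE mulr_suml.
by apply: eq_bigr => t _; rewrite !mxE mulrA.
Qed.

Lemma disc_visits_ge0 s : 0 <= disc_visits p 0 s.
Proof.
apply: (cvgr_to_ge (disc_partial_cvg s)); apply: nearW => n.
rewrite /disc_partial summxE; apply: sumr_ge0 => t _; rewrite !mxE.
have [h0 _] := state_distr_is_distr t.
by rewrite mulr_ge0 ?exprn_ge0 //; case/andP: g01 => /ltW.
Qed.

(* Summing d_p (1 - gamma M_p) = xi over states gives (1 - gamma) |d_p| = 1. *)
Lemma disc_visits_sum : \sum_s disc_visits p 0 s = (1 - gamma)^-1.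
Proof.
have E : disc_visits p - gamma *: (disc_visits p *m trans_mx p) = init_row.
  rewrite scalemxAr -[X in X - _]mulmx1 -mulmxBr.
  by rewrite /disc_visits mulmxKV // resolvent_unit.
have rows := trans_mx_row_sum.
move: E rows; set D := disc_visits p; set M := trans_mx p; clearbody D M => E rows.
have : \sum_s' (D - gamma *: (D *m M)) 0 s' = 1.
  by rewrite E; under eq_bigr do rewrite mxE; case: xid.
under eq_bigr do rewrite !mxE.
rewrite sumrB -mulr_sumr exchange_big /=.
under [X in _ - _ * X = _]eq_bigr do rewrite -mulr_sumr rows mulr1.
case/andP: g01 => g0 g1 h.
have g1' : 1 - gamma != 0 by rewrite subr_eq0 gt_eqF.
by apply: (mulfI g1'); rewrite divff //; lra.
Qed.

Lemma occupancy_l1norm : l1norm (occupancy P xi gamma p) = (1 - gamma)^-1.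
Proof.
rewrite -disc_visits_sum /l1norm; apply: eq_bigr => s _.
under eq_bigr do rewrite occupancy_factor normrM (ger0_norm (disc_visits_ge0 _)).
have [p0 p1] := pd s.
by rewrite -mulr_sumr (eq_bigr (fun a => p s a)) ?p1 ?mulr1 // => a _; rewrite ger0_norm.
Qed.

End FixedPolicy.
End Occupancy.

Section DirectionalDerivatives.
Context {R : realType} {V : normedModType R}.

Lemma is_derive_big_sum (I : Type) (r : seq I) (Pr : pred I) (f : I -> V -> R)
    (df : I -> R) (x v : V) :
  (forall i, is_derive x v (f i) (df i)) ->
  is_derive x v (fun t => \sum_(i <- r | Pr i) f i t) (\sum_(i <- r | Pr i) df i).
Proof.
move=> H; elim: r => [|i r IH].
  by rewrite big_nil; under eq_fun do rewrite big_nil; exact: is_derive_cst.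
rewrite big_cons; under eq_fun do rewrite big_cons.
by case: (Pr i) => //; exact: (is_deriveD (f := f i)).
Qed.

Lemma derivable_big_sum (I : Type) (r : seq I) (Pr : pred I) (f : I -> V -> R)
    (x v : V) :
  (forall i, derivable (f i) x v) -> derivable (fun t => \sum_(i <- r | Pr i) f i t) x v.
Proof.
by move=> H; have [] := @is_derive_big_sum I r Pr f (fun i => 'D_v (f i) x) x v.
Qed.

Lemma derivable_big_prod (I : Type) (r : seq I) (Pr : pred I) (f : I -> V -> R)
    (x v : V) :
  (forall i, derivable (f i) x v) -> derivable (fun t => \prod_(i <- r | Pr i) f i t) x v.
Proof.
move=> H; elim: r => [|i r IH].
  by under eq_fun do rewrite big_nil; exact: derivable_cst.
under eq_fun do rewrite big_cons.
by case: (Pr i) => //; exact: (derivableM (f := f i)).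
Qed.

(* Leibniz formula: the determinant is a polynomial in the entries. *)
Lemma derivable_det k (M : V -> 'M[R]_k) (x v : V) :
  (forall i j, derivable (fun t => M t i j) x v) -> derivable (fun t => \det (M t)) x v.
Proof.
move=> H; apply: derivable_big_sum => s /=.
by apply: derivableM; [exact: derivable_cst | exact: derivable_big_prod].
Qed.

Lemma derivable_adj k (M : V -> 'M[R]_k) (x v : V) i j :
  (forall i j, derivable (fun t => M t i j) x v) ->
  derivable (fun t => \adj (M t) i j) x v.
Proof.
move=> H; under eq_fun do rewrite mxE.
apply: (derivableZ (f := fun t => \det (row' j (col' i (M t))))).
apply: derivable_det => p q; under eq_fun do rewrite !mxE.
exact: H.
Qed.

Lemma derive_along_line {W : normedModType R} (f : V -> W) x e :
  'D_e f x = 'D_1 (fun h : R => f (h *: e + x)) 0.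
Proof.
set g := fun h : R => f (h *: e + x).
rewrite /derive; suff -> : (fun h : R => h^-1 *: ((f \o shift x) (h *: e) - f x)) =
  (fun h : R => h^-1 *: ((g \o shift 0) (h *: 1) - g 0)) by [].
by apply: funext => h; rewrite /g /= [h *: 1]mulr1 addr0 scale0r add0r.
Qed.

Lemma derive_comp_diff {U : normedModType R} (G : U -> R) (f : V -> U) x e :
  derivable f x e -> differentiable G (f x) ->
  'D_e (fun t => G (f t)) x = 'd G (f x) ('D_e f x).
Proof.
move=> df dG; set c := fun h : R => f (h *: e + x).
have dc : differentiable c 0 by apply/derivable1_diffP; exact: ((derivable1P f x e).1 df).
have c0 : c 0 = f x by rewrite /c scale0r add0r.
have dG' : differentiable G (c 0) by rewrite c0.
rewrite derive_along_line (derive_along_line f).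
have -> : (fun h : R => G (f (h *: e + x))) = G \o c by [].
rewrite deriveE; last exact: differentiable_comp.
by rewrite diff_comp // deriveE // c0.
Qed.

End DirectionalDerivatives.

(* The occupancy measure is derivable in the policy parameter: by Cramer's
   rule lambda_{sa} = (sum_k xi_k adj(A)_{ks} / det A) p(a|s) with
   A = 1 - gamma M_p, a rational function of the policy entries. *)
Lemma occupancy_derivable {R : realType} {V : normedModType R} {nS nA : nat}
    (P : 'I_nS -> 'I_nA -> 'I_nS -> R) (xi : 'I_nS -> R) (gamma : R)
    (pi : V -> 'I_nS -> 'I_nA -> R) (theta v : V) :
  (forall s a, is_distr (P s a)) -> is_distr xi -> 0 < gamma < 1 ->
  (\forall t \near theta, forall s, is_distr (pi t s)) ->
  (forall s a, derivable (fun t => pi t s a) theta v) ->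
  derivable (fun t => occupancy P xi gamma (pi t)) theta v.
Proof.
move=> Pd xid g01 pid dpi; apply/derivable_mxP => s a.
pose A t := resolvent_mx P gamma (pi t).
pose G t := (\sum_k xi k * ((\det (A t))^-1 * \adj (A t) k s)) * pi t s a.
apply: (@near_eq_derivable _ _ _ G).
  near=> t; have pid_t : forall s, is_distr (pi t s) by near: t.
  rewrite occupancy_factor // /G /disc_visits mxE; congr (_ * _).
  by apply: eq_bigr => k _; rewrite /invmx resolvent_unit // !mxE.
have dA i j : derivable (fun t => A t i j) theta v.
  under eq_fun do rewrite /A /resolvent_mx !mxE.
  apply: derivableB; first exact: derivable_cst.
  apply: (derivableZ (f := fun t => \sum_b pi t i b * P i b j)).
  apply: derivable_big_sum => b.
  by apply: (derivableM (f := fun t => pi t i b)) => //; exact: derivable_cst.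
apply: (@derivableM _ _ (fun t => \sum_k xi k * ((\det (A t))^-1 * \adj (A t) k s))
          (fun t => pi t s a)) => //.
apply: derivable_big_sum => k.
apply: (derivableZ (f := fun t => (\det (A t))^-1 * \adj (A t) k s)).
apply: derivableM; last exact: derivable_adj.
apply: derivableV; last exact: derivable_det.
have := resolvent_unit P gamma Pd g01 _ (nbhs_singleton pid).
by rewrite unitmxE unitfE.
Unshelve. all: by end_near.
Qed.

Lemma sqr_le_of_norm_le {R : realDomainType} (a b : R) : `|a| <= b -> a ^+ 2 <= b ^+ 2.
Proof. by move=> h; have := normr_ge0 a; rewrite -real_normK ?num_real //; nra. Qed.

Lemma le_of_sqr_le {R : realDomainType} (a b : R) :
  0 <= a -> 0 <= b -> a ^+ 2 <= b ^+ 2 -> a <= b.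
Proof. by move=> ha hb h; nra. Qed.

Lemma small_step {R : realFieldType} (a Q delta : R) :
  0 <= a -> a <= Q -> 0 < delta -> delta < Q^-1 -> a * delta <= 1.
Proof.
move=> a0 aQ d0 dQ; have Q0 : 0 < Q by rewrite -invr_gt0 (lt_trans d0).
have dQ1 : delta * Q < 1 by rewrite -ltr_pdivlMr // div1r.
by apply: le_trans (ltW dQ1); rewrite mulrC ler_wpM2l // ltW.
Qed.

Lemma sqr_sum_le {R : realFieldType} {d : nat} (c : 'I_d -> R) :
  (\sum_i c i) ^+ 2 <= d%:R * \sum_i c i ^+ 2.
Proof.
rewrite expr2 big_distrlr /=.
apply: (@le_trans _ _ (\sum_i \sum_j (c i ^+ 2 + c j ^+ 2) / 2)).
  by apply: ler_sum => i _; apply: ler_sum => j _; have := sqr_ge0 (c i - c j); lra.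
rewrite (eq_bigr (fun i => (d%:R * c i ^+ 2 + \sum_j c j ^+ 2) / 2)).
  by rewrite -mulr_suml big_split /= -mulr_sumr sumr_const card_ord -[_ *+ d]mulr_natl; lra.
by move=> i _; rewrite -mulr_suml big_split /= sumr_const card_ord -[_ *+ d]mulr_natl.
Qed.

Lemma sqnorm2_eq0 {R : realType} {d : nat} (x : 'rV[R]_d) : sqnorm2 x = 0 -> x = 0.
Proof.
move=> x0; apply/matrixP => i j; rewrite ord1 mxE; apply/eqP; rewrite -sqrf_eq0.
by apply/eqP; apply: (psumr_eq0P _ x0) => // k _; rewrite -expr2 sqr_ge0.
Qed.

(* A linear map J : R^d -> R^{m x n}, x |-> sum_i x_i J_i (below, the Jacobian
   of the occupancy measure), and its adjoint v |-> (<v, J_i>)_i. *)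
Section JacobianMap.
Context {R : realType} {m n d : nat}.
Variable J : 'I_d -> 'M[R]_(m, n).

Definition jac_map (x : 'rV[R]_d) : 'M[R]_(m, n) := \sum_i x 0 i *: J i.
Definition jac_adj (v : 'M[R]_(m, n)) : 'rV[R]_d := \row_i mxdot v (J i).
Definition jac_sqsum : R := \sum_i l1norm (J i) ^+ 2.

Lemma jac_adjP v x : rvdot (jac_adj v) x = mxdot v (jac_map x).
Proof.
rewrite /rvdot /jac_map mxdot_sumr; apply: eq_bigr => i _.
by rewrite mxE mxdotZr mulrC.
Qed.

Lemma jac_mapD x y : jac_map (x + y) = jac_map x + jac_map y.
Proof. by rewrite /jac_map -big_split; apply: eq_bigr => i _; rewrite mxE scalerDl. Qed.

Lemma jac_adjB v w : jac_adj v - jac_adj w = jac_adj (v - w).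
Proof. by apply/matrixP => i j; rewrite !mxE mxdotBl. Qed.

Lemma jac_sqsum_ge0 : 0 <= jac_sqsum.
Proof. by apply: sumr_ge0 => i _; rewrite sqr_ge0. Qed.

Lemma jac_map_bound x : l1norm (jac_map x) ^+ 2 <= d%:R * jac_sqsum * sqnorm2 x.
Proof.
apply: (@le_trans _ _ ((\sum_i `|x 0 i| * l1norm (J i)) ^+ 2)).
  apply: sqr_le_of_norm_le; rewrite ger0_norm ?l1norm_ge0 //.
  rewrite /jac_map; apply: le_trans (l1norm_sum _ _) _.
  by apply: ler_sum => i _; rewrite l1normZ.
apply: le_trans (sqr_sum_le _) _.
rewrite -mulrA ler_wpM2l // /sqnorm2 /rvdot /jac_sqsum mulr_sumr.
apply: ler_sum => i _; rewrite exprMn real_normK ?num_real // -expr2 mulrC.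
by rewrite ler_wpM2r ?sqr_ge0 // (bigD1 i) //= lerDl sumr_ge0 // => k _; rewrite sqr_ge0.
Qed.

Lemma jac_adj_bound v : sqnorm2 (jac_adj v) <= linfnorm v ^+ 2 * jac_sqsum.
Proof.
rewrite /sqnorm2 /rvdot mulr_sumr; apply: ler_sum => i _.
by rewrite mxE -expr2 -exprMn; apply/sqr_le_of_norm_le/mxdot_holder.
Qed.

End JacobianMap.

(* Fix a base point lam0 (the
   occupancy measure at theta), a linear map J (its Jacobian) and an objective
   F with L-Lipschitz gradient.  For a step delta, x |-> F (lam0 + delta J x)
   - delta/2 ||x||^2 is the primal value; every admissible point l (with
   ||l||_1 <= rho) supplies the concave upper model
   F l + <grad F l, lam0 + delta J x - l> - delta/2 ||x||^2.
   We call xs a certified maximizer when every primal value is below every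
   upper model at xs; such points are within O(delta) of J^T grad F(lam0). *)
Section PerturbedSaddle.
Context {R : realType} {m n d : nat}.
Variable F : 'M[R]_(m, n) -> R.
Hypothesis dF : forall l, differentiable F l.
Variable L : R.
Hypothesis lipF : forall l l', linfnorm (gradM F l - gradM F l') <= L * l1norm (l - l').
Variables (J : 'I_d -> 'M[R]_(m, n)) (lam0 : 'M[R]_(m, n)) (rho : R).

Local Notation KJ := (d%:R * jac_sqsum J).
Local Notation g0 := (jac_adj J (gradM F lam0)).

Definition primal_val (delta : R) (x : 'rV[R]_d) : R :=
  F (lam0 + delta *: jac_map J x) - delta / 2 * sqnorm2 x.

Definition upper_model (delta : R) (x : 'rV[R]_d) (l : 'M[R]_(m, n)) : R :=
  F l + mxdot (gradM F l) (lam0 + delta *: jac_map J x - l) - delta / 2 * sqnorm2 x.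

Definition certified_max (delta : R) (xs : 'rV[R]_d) : Prop :=
  forall x l, l1norm l <= rho -> primal_val delta x <= upper_model delta xs l.

Lemma KJ_ge0 : 0 <= KJ.
Proof. by rewrite mulr_ge0 ?jac_sqsum_ge0. Qed.

Lemma descent_along_jac (delta : R) l u :
  F l + delta * rvdot (jac_adj J (gradM F l)) u - `|L| * (delta ^+ 2 * (KJ * sqnorm2 u))
  <= F (l + delta *: jac_map J u).
Proof.
apply: le_trans _ (@lipschitz_grad_lb _ _ _ F dF L l (delta *: jac_map J u) lipF).
rewrite mxdotZr -jac_adjP l1normZ exprMn real_normK ?num_real //.
by rewrite lerD2l lerN2 ler_wpM2l // ler_wpM2l ?sqr_ge0 // jac_map_bound.
Qed.

Lemma jac_adj_grad_lipschitz l h :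
  sqnorm2 (jac_adj J (gradM F (l + h)) - jac_adj J (gradM F l))
  <= L ^+ 2 * l1norm h ^+ 2 * jac_sqsum J.
Proof.
rewrite jac_adjB; apply: le_trans (jac_adj_bound _ _) _.
rewrite ler_wpM2r ?jac_sqsum_ge0 // -exprMn; apply: sqr_le_of_norm_le.
rewrite ger0_norm ?linfnorm_ge0 //; apply: le_trans (lipF _ _) _.
by rewrite [l + h]addrC addrK.
Qed.

(* Testing against x = g0 and l = lam0:
   ||xs - g0||^2 <= 2 |L| delta KJ ||g0||^2. *)
Lemma certified_max_near (delta : R) xs :
  0 < delta -> l1norm lam0 <= rho -> certified_max delta xs ->
  sqnorm2 (xs - g0) <= 2 * `|L| * delta * KJ * sqnorm2 g0.
Proof.
move=> d0 lam0_adm cert.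
have := cert g0 lam0 lam0_adm; rewrite /primal_val /upper_model.
have := descent_along_jac delta lam0 g0.
rewrite [lam0 + _ - _]addrC addKr mxdotZr -jac_adjP (rvdotC g0 xs) => lb ub.
rewrite sqnorm2B -(ler_pM2l d0).
by move: lb ub; rewrite /sqnorm2; nra.
Qed.

(* Testing against x = J^T grad F(mu) and l = mu := lam0 + delta J xs shows
   that a certified maximizer is a fixed point of x |-> J^T grad F(lam0 + delta J x)
   once 4 |L| KJ delta <= 1. *)
Lemma certified_max_fixed_point (delta : R) xs :
  0 < delta -> 4 * `|L| * KJ * delta <= 1 ->
  l1norm (lam0 + delta *: jac_map J xs) <= rho -> certified_max delta xs ->
  xs = jac_adj J (gradM F (lam0 + delta *: jac_map J xs)).
Proof.
move=> d0 small mu_adm cert.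
set mu := lam0 + delta *: jac_map J xs; set w := jac_adj J (gradM F mu).
set u := w - xs; have wE : w = xs + u by rewrite /u addrC subrK.
have ub := cert w mu mu_adm; rewrite /primal_val /upper_model -/mu mxdotBr subrr in ub.
have lb := descent_along_jac delta mu u.
have muE : mu + delta *: jac_map J u = lam0 + delta *: jac_map J w.
  by rewrite wE jac_mapD scalerDr addrA.
rewrite muE -/w in lb; rewrite wE sqnorm2D rvdotDl -/(sqnorm2 u) in ub lb.
have u0 := sqnorm2_ge0 u.
have quad : `|L| * KJ * delta * (delta * sqnorm2 u) <= 1 / 4 * (delta * sqnorm2 u).
  by rewrite ler_wpM2r ?mulr_ge0 ?(ltW d0) //; lra.
have : delta * sqnorm2 u <= 0 by nra.
rewrite pmulr_rle0 // => u_le0.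
suff : u = 0 by rewrite /u => /eqP; rewrite subr_eq0 => /eqP.
by apply: sqnorm2_eq0; apply/eqP; rewrite eq_le u_le0 sqnorm2_ge0.
Qed.

Local Notation B1 := (2 * (2 * `|L| * KJ * sqnorm2 g0) + 2 * sqnorm2 g0).

Lemma certified_max_bounded (delta : R) xs :
  0 < delta <= 1 -> l1norm lam0 <= rho -> certified_max delta xs -> sqnorm2 xs <= B1.
Proof.
move=> /andP[d0 d1] lam0_adm cert.
have near_g0 := certified_max_near _ _ d0 lam0_adm cert.
have hLK : 0 <= `|L| * KJ * sqnorm2 g0 by rewrite mulr_ge0 ?sqnorm2_ge0 // mulr_ge0 ?KJ_ge0.
rewrite -[xs](subrK g0); apply: le_trans (sqnorm2D_le _ _) _.
by rewrite lerD2r ler_wpM2l //; apply: le_trans near_g0 _; nra.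
Qed.

Lemma certified_max_error :
  l1norm lam0 < rho ->
  exists K eta, 0 < K /\ 0 < eta <= 1 /\ forall (delta : R) xs, 0 < delta < eta ->
    certified_max delta xs -> sqnorm2 (xs - g0) <= K * delta ^+ 2.
Proof.
move=> lam0_int; set eps := rho - l1norm lam0.
have eps0 : 0 < eps by rewrite subr_gt0.
have KJ0 := KJ_ge0; have S0 := jac_sqsum_ge0 J; have L0 := normr_ge0 L.
have B10 : 0 <= B1 by rewrite addr_ge0 ?mulr_ge0 ?sqnorm2_ge0.
have M0 : 0 <= KJ * B1 / eps ^+ 2 by rewrite !mulr_ge0 // invr_ge0 sqr_ge0.
have LK0 : 0 <= 4 * `|L| * KJ by rewrite !mulr_ge0.
set Q := 1 + 4 * `|L| * KJ + KJ * B1 / eps ^+ 2.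
exists (L ^+ 2 * KJ * B1 * jac_sqsum J + 1), Q^-1.
have K0 : 0 <= L ^+ 2 * KJ * B1 * jac_sqsum J.
  by do 3 apply: mulr_ge0 => //; exact: sqr_ge0.
split; first by lra.
have Q1 : 1 <= Q by rewrite /Q; lra.
have Q0 : 0 < Q by lra.
split; first by rewrite invr_gt0 Q0 invf_le1.
move=> delta xs /andP[d0 dQ] cert.
have d1 : delta <= 1.
  by rewrite -[delta]mul1r (small_step 1 Q delta) // /Q; lra.
have dL : 4 * `|L| * KJ * delta <= 1.
  by rewrite (small_step _ Q delta) // /Q; lra.
have dM : delta * (KJ * B1) <= eps ^+ 2.
  have Mdelta := small_step (KJ * B1 / eps ^+ 2) Q delta M0 _ d0 dQ.
  have -> : delta * (KJ * B1) = KJ * B1 / eps ^+ 2 * delta * eps ^+ 2.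
    by field; rewrite gt_eqF.
  by rewrite -[leRHS]mul1r ler_wpM2r ?sqr_ge0 // Mdelta // /Q; lra.
have bxs := certified_max_bounded _ _ (introT andP (conj d0 d1)) (ltW lam0_int) cert.
have hJ : (delta * l1norm (jac_map J xs)) ^+ 2 <= delta ^+ 2 * (KJ * B1).
  rewrite exprMn ler_wpM2l ?sqr_ge0 //; apply: le_trans (jac_map_bound _ _) _.
  by rewrite ler_wpM2l.
have step : delta * l1norm (jac_map J xs) <= eps.
  apply: le_of_sqr_le; rewrite ?mulr_ge0 ?l1norm_ge0 ?(ltW d0) ?(ltW eps0) //.
  have KB0 : 0 <= KJ * B1 by rewrite mulr_ge0.
  have d2 : delta ^+ 2 <= delta by rewrite expr2 ler_piMl ?(ltW d0).
  by apply: le_trans hJ _; apply: le_trans dM; rewrite ler_wpM2r.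
have mu_adm : l1norm (lam0 + delta *: jac_map J xs) <= rho.
  apply: le_trans (l1normD _ _) _; rewrite l1normZ ger0_norm ?(ltW d0) //.
  by rewrite -lerBrDl.
rewrite {1}(certified_max_fixed_point _ _ d0 dL mu_adm cert).
apply: le_trans (jac_adj_grad_lipschitz _ _) _.
rewrite l1normZ ger0_norm ?(ltW d0) // mulrDl mul1r.
have : L ^+ 2 * (delta * l1norm (jac_map J xs)) ^+ 2 * jac_sqsum J <=
       L ^+ 2 * (delta ^+ 2 * (KJ * B1)) * jac_sqsum J.
  by rewrite ler_wpM2r // ler_wpM2l ?sqr_ge0.
have : 0 <= delta ^+ 2 by rewrite sqr_ge0.
by nra.
Qed.

End PerturbedSaddle.

(* The inner value of the perturbed max-min problem, after linearizing the
   value function: x |-> inf_{||z||_inf <= lF} <z, lam0 + delta J x>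
   - delta/2 ||x||^2 - F^*(z). *)
Definition perturbed_dual_value {R : realType} {m n d : nat} (F : 'M[R]_(m, n) -> R)
    (J : 'I_d -> 'M[R]_(m, n)) (lam0 : 'M[R]_(m, n)) (lF delta : R) (x : 'rV[R]_d)
    : \bar R :=
  ereal_inf [set ((mxdot z (lam0 + delta *: jac_map J x) - delta / 2 * sqnorm2 x)%:E
                  - fenchel_dual F z)%E | z in [set z | linfnorm z <= lF]].

(* A maximizer of the inner value is a certified maximizer: Fenchel-Young
   bounds the inner infimum below by the primal value, and the admissible
   choice z = grad F(l) bounds it above by the concave upper model at l. *)
Lemma argmax_certified {R : realType} {m n d : nat} (F : 'M[R]_(m, n) -> R)
    (J : 'I_d -> 'M[R]_(m, n)) (lam0 : 'M[R]_(m, n)) (rho lF delta : R)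
    (xs : 'rV[R]_d) :
  concave_fun F -> (forall l, differentiable F l) ->
  (forall l, l1norm l <= rho -> linfnorm (gradM F l) <= lF) ->
  (forall x, (perturbed_dual_value F J lam0 lF delta x
              <= perturbed_dual_value F J lam0 lF delta xs)%E) ->
  certified_max F J lam0 rho delta xs.
Proof.
move=> cF dF bdF xmax x l l_adm.
have lower : ((primal_val F J lam0 delta x)%:E
              <= perturbed_dual_value F J lam0 lF delta x)%E.
  by apply: le_ereal_inf_tmp => _ [z _ <-]; apply: fenchel_young_shift.
have upper : (perturbed_dual_value F J lam0 lF delta xs
              <= (upper_model F J lam0 delta xs l)%:E)%E.
  apply: ereal_inf_lbound; exists (gradM F l); first exact: bdF.
  exact: fenchel_young_shift_grad.
by rewrite -lee_fin (le_trans lower (le_trans (xmax x) upper)).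
Qed.

Section ParameterGradients.
Context {R : realType} {m n d : nat}.
Variables (lam : 'rV[R]_d -> 'M[R]_(m, n)) (theta : 'rV[R]_d).
Hypothesis dlam : forall i, derivable lam theta (delta_mx 0 i).

Definition jacobian : 'I_d -> 'M[R]_(m, n) := fun i => 'D_(delta_mx 0 i) lam theta.

Lemma grad_mxdot z : grad (fun t => mxdot z (lam t)) theta = jac_adj jacobian z.
Proof.
apply/matrixP => i0 i; rewrite !mxE; apply: derive_val.
apply: is_derive_big_sum => s; apply: is_derive_big_sum => a.
apply: (is_deriveZ (f := fun t => lam t s a)).
rewrite /jacobian derive_mx // mxE; apply: derivableP.
by move/derivable_mxP: (dlam i); apply.
Qed.

Lemma grad_comp (G : 'M[R]_(m, n) -> R) :
  differentiable G (lam theta) ->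
  grad (fun t => G (lam t)) theta = jac_adj jacobian (gradM G (lam theta)).
Proof.
by move=> dG; apply/matrixP => i0 i; rewrite !mxE derive_comp_diff // gradM_diff.
Qed.

End ParameterGradients.

Theorem mainTheorem3 (R : realType) (nS nA d : nat)
  (P : 'I_nS -> 'I_nA -> 'I_nS -> R) (xi : 'I_nS -> R) (gamma : R)
  (Theta : set 'rV[R]_d) (pi : 'rV[R]_d -> 'I_nS -> 'I_nA -> R)
  (F : 'M[R]_(nS, nA) -> R) (lF LF lFs C : R) (theta : 'rV[R]_d)
  (xstar : R -> 'rV[R]_d) :
  (* finite MDP *)
  (forall s a, is_distr (P s a)) -> is_distr xi -> 0 < gamma < 1 ->
  (* parametrized policies on an open parameter set Theta *)
  open Theta -> theta \in Theta ->
  (forall th, th \in Theta -> forall s, is_distr (pi th s)) ->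
  (* (i) *)
  concave_fun F -> (forall l, differentiable F l) ->
  (forall l, l1norm l <= 2 / (1 - gamma) -> linfnorm (gradM F l) <= lF) ->
  (* (ii) *)
  (forall l l', linfnorm (gradM F l - gradM F l') <= LF * l1norm (l - l')) ->
  (* (iii) *)
  (forall z z', linfnorm z <= 2 * lF -> linfnorm z' <= 2 * lF ->
     (-oo < fenchel_dual F z)%E -> (-oo < fenchel_dual F z')%E ->
     (`|fenchel_dual F z - fenchel_dual F z'| <= (lFs * linfnorm (z - z'))%:E)%E) ->
  (* (iv) *)
  (forall th, th \in Theta -> forall s a, differentiable (fun t => pi t s a) th) ->
  (forall th, th \in Theta -> forall s,
     opnorm_inf2_le (fun a => grad (fun t => pi t s a) th) C) ->
  (* x*(delta) = argmax_x min_{||z||_inf <= lF} Phi_delta(x, z) *)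
  let lam t := occupancy P xi gamma (pi t) in
  let V t z := mxdot z (lam t) in
  let Phi (delta : R) (x : 'rV[R]_d) (z : 'M[R]_(nS, nA)) : \bar R :=
    ((V theta z + delta * rvdot (grad (fun t => V t z) theta) x
      - delta / 2 * sqnorm2 x)%:E - fenchel_dual F z)%E in
  let psi delta x := ereal_inf [set Phi delta x z | z in [set z | linfnorm z <= lF]] in
  (forall delta, 0 < delta < 1 -> forall x, (psi delta x <= psi delta (xstar delta))%E) ->
  (* ||x*(delta) - grad R(pi_theta)||^2 = O(delta^2) as delta -> 0+ *)
  exists K eta, 0 < K /\ 0 < eta /\
    forall delta, 0 < delta < eta ->
      sqnorm2 (xstar delta - grad (fun t => F (lam t)) theta) <= K * delta ^+ 2.
Proof.
move=> Pd xid g01 oT thT pid cF dF bdF lipF _ pidiff _ lam V Phi psi xmax.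
have nearT : \forall t \near theta, forall s, is_distr (pi t s).
  have : \forall t \near theta, Theta t.
    by move: oT; rewrite openE => /(_ theta); apply; rewrite -in_setE.
  by apply: filterS => t Tt; apply: pid; rewrite in_setE.
have dlam i : derivable lam theta (delta_mx 0 i).
  by apply: occupancy_derivable => // s a; apply/diff_derivable/pidiff.
have psiE delta x : psi delta x =
    perturbed_dual_value F (jacobian lam theta) (lam theta) lF delta x.
  congr ereal_inf; apply: eq_imagel => z _.
  by rewrite /Phi /V grad_mxdot // jac_adjP mxdotDr mxdotZr.
have lam_int : l1norm (lam theta) < 2 / (1 - gamma).
  have g1 : 0 < 1 - gamma by case/andP: g01 => _; rewrite subr_gt0.
  rewrite /lam (occupancy_l1norm P xi gamma Pd xid g01 _ (pid theta thT)).
  by rewrite -[X in X < _]mul1r ltr_pM2r ?invr_gt0 // ltr1n.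
have [K [eta [K0 [/andP[eta0 eta1] err]]]] :=
  certified_max_error F dF LF lipF (jacobian lam theta) _ _ lam_int.
exists K, eta; split => //; split => // delta /andP[d0 deta].
rewrite grad_comp //; apply: err; first by rewrite d0.
apply: (@argmax_certified _ _ _ _ F _ _ _ lF _ _ cF dF bdF) => x; rewrite -!psiE.
by apply: xmax; rewrite d0 (lt_le_trans deta).
Qed.
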